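(* Let $\mathcal{P}(\mathcal{G})$ be the pdRCON model represented by the graph $\mathcal{G} = (V, E_{\mathcal{G}}, \mathbb{L}_{\mathcal{G}}, \mathbb{E}_{\mathcal{G}})$. Then the set of pdCGs representing the neighbouring submodels of $\mathcal{P}(\mathcal{G})$, that is the set of graphs $\mathcal{H}\in \mathcal{P}$ that are covered by $\mathcal{G}$ in the model inclusion order ($\mathcal{H} \prec_{s} \mathcal{G}$ with no $\mathcal{F}\in\mathcal{P}$ such that $\mathcal{H}\prec_s\mathcal{F}\prec_s\mathcal{G}$), is made up of: (a) all graphs obtained by merging exactly two vertex atomic colour classes of $\mathcal{G}$ into a vertex twin-pairing class, namely (i) $\mathcal{H}=(V, E_{\mathcal{G}},\mathbb{L}_{\mathcal{G}}\setminus \{i\}, \mathbb{E}_{\mathcal{G}})$ for all $i\in \mathbb{L}_{\mathcal{G}}$; (b) all graphs obtained by merging exactly two edge atomic colour classes of $\mathcal{G}$ into an edge twin-pairing class, namely (ii) $\mathcal{H}=(V, E_{\mathcal{G}}, \mathbb{L}_{\mathcal{G}}, \mathbb{E}_{\mathcal{G}}\setminus \{(i,j)\})$ for all $(i, j)\in \mathbb{E}_{\mathcal{G}}$; (c) all graphs obtained by removing exactly one edge atomic colour class from $\mathcal{G}$, namely (iii) $\mathcal{H}=(V, E_{\mathcal{G}}\setminus\{(i,j)\}, \mathbb{L}_{\mathcal{G}}, \mathbb{E}_{\mathcal{G}} \setminus \{(i,j)\})$ for all $(i,j)\in \mathbb{E}_{\mathcal{G}}$; (iv) $\mathcal{H}=(V,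 E_{\mathcal{G}}\setminus\{\tau(i,j)\}, \mathbb{L}_{\mathcal{G}}, \mathbb{E}_{\mathcal{G}} \setminus \{(i,j)\})$ for all $(i,j)\in \mathbb{E}_{\mathcal{G}}$; (v) $\mathcal{H}=(V, E_{\mathcal{G}}\setminus\{(i,j)\}, \mathbb{L}_{\mathcal{G}}, \mathbb{E}_{\mathcal{G}})$ for all $(i,j)\in E_{\mathcal{G}}$ such that $\tau(i,j)\not\in E_{\mathcal{G}}$; (vi) $\mathcal{H}=(V, E_{\mathcal{G}} \setminus \{(i,\tau(i))\}, \mathbb{L}_{\mathcal{G}}, \mathbb{E}_{\mathcal{G}})$ for all $i\in V$ such that $(i,\tau(i)) \in E_{\mathcal{G}}$; (d) all graphs obtained by removing exactly one edge twin-pairing colour class from $\mathcal{G}$, namely (vii) $\mathcal{H}=(V, E_{\mathcal{G}}\setminus\{(i,j), \tau(i,j)\}, \mathbb{L}_{\mathcal{G}}, \mathbb{E}_{\mathcal{G}})$ for all $(i,j), \tau(i,j) \in E_{\mathcal{G}}$ such that $(i,j)\neq \tau(i,j)$ and both $(i,j)\notin \mathbb{E}_{\mathcal{G}}$ and $\tau(i,j)\notin \mathbb{E}_{\mathcal{G}}$.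
   Context: Let $V=\{1,\dots,p\}$ and let $\tau$ be a twin-pairing function on $V$, i.e. $\tau(i)\in V$ with $\tau(\tau(i))=i$ and $\tau(i)\neq i$; it is extended to edges by $\tau(i,j)=(\tau(i),\tau(j))$ (endpoints reordered so the smaller comes first) and to sets elementwise. Fix a partition $(L,R)$ of $V$ with $\tau(L)=R$, numbered so that $L=\{1,\dots,q\}$, $R=\{q+1,\dots,p\}$. Let $F_V=\{(i,j): i,j\in V, i<j\}$, $F_L=\{(i,j)\in F_V: i<\tau(j)\}$, $F_R=\{(i,j)\in F_V: i>\tau(j)\}$. A coloured graph $\mathcal G=(\mathcal V,\mathcal E)$ consists of a partition $\mathcal V$ of $V$ into vertex colour classes and a partition $\mathcal E$ of an edge set $E\subseteq F_V$ into edge colour classes. It is a coloured graph for paired data (pdCG) if every colour class is either atomic (a single element) or twin-pairing (of the form $\{i,\tau(i)\}$ or $\{(i,j),\tau(i,j)\}$ with $(i,j)\neq\tau(i,j)$). The associated RCON model for paired data (pdRCON model) $\mathcal{P}(\mathcal G)$ is the family of Gaussian distributions whose concentration matrix has zero entries for missing edges and equal entries for vertices (diagonal entries) or edges (off-diagonal entries) in the same colour class; $\mathcal{P}$ denotes the family of all pdCGs on $V$. Every pdCG is equivalently represented by the quadruplet $(V,E,\mathbb L,\mathbb E)$ where $E$ is the union of the edge colour classes, $E_L=E\cap F_L$, $E_R=E\cap F_R$, $\mathbb L=\{i\in L:\{i\}\in\mathcal V\}$ (vertices of $L$ in atomic classes) and $\mathbb E=\{(i,j)\in E_L\cap\tau(E_R):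 \{(i,j)\}\in\mathcal E\}$ (edges of $E_L$ whose twin is present and which, with their twin, form atomic classes). The model inclusion order is $\mathcal H\preceq_s\mathcal G$ iff $\mathcal P(\mathcal H)\subseteq\mathcal P(\mathcal G)$, which holds iff the edge set of $\mathcal H$ is contained in that of $\mathcal G$, every vertex colour class of $\mathcal H$ is a union of vertex colour classes of $\mathcal G$, and every edge colour class of $\mathcal H$ is a union of edge colour classes of $\mathcal G$; $\prec_s$ is its strict version. *)

From HB Require Import structures.
From mathcomp Require Import all_boot.
Set Implicit Arguments.
Unset Strict Implicit.
Unset Printing Implicit Defensive.

(* Conventions: V = {1,...,p} is represented by 'I_p = {0,...,p-1}
   (shift by one); L = {1,...,q} becomes [set i | i < q]. *)

Section PairedData.
Variables (p : nat) (tau : 'I_p -> 'I_p).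

Definition edge := ('I_p * 'I_p)%type.

Definition tauE (e : edge) : edge :=
  let a := tau e.1 in let b := tau e.2 in
  if (a < b)%N then (a, b) else (b, a).

Definition FV : {set edge} := [set e : edge | (e.1 < e.2)%N].
Definition FL : {set edge} := [set e in FV | (e.1 < tau e.2)%N].
Definition FR : {set edge} := [set e in FV | (tau e.2 < e.1)%N].

(* a coloured graph: vertex colour classes and edge colour classes;
   the edge set E is the union of the edge colour classes *)
Record cgraph := CGraph {
  vcl : {set {set 'I_p}};
  ecl : {set {set edge}} }.

Definition Eset (G : cgraph) : {set edge} := cover (ecl G).

Definition is_pdCG (G : cgraph) : Prop :=
  [/\ partition (vcl G) [set: 'I_p],
      partition (ecl G) (Eset G),
      Eset G \subset FV,
      (forall C, C \in vcl G ->
         (exists i, C = [set i]) \/ (exists i, C = [set i; tau i]))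
    & (forall C, C \in ecl G ->
         (exists e, C = [set e]) \/
         (exists e, e != tauE e /\ C = [set e; tauE e]))].

Definition union_of (T : finType) (P : {set {set T}}) (C : {set T}) : Prop :=
  exists2 S : {set {set T}}, S \subset P & C = cover S.

(* model inclusion order H <=_s G  (P(H) subset of P(G)) *)
Definition sub_model (H G : cgraph) : Prop :=
  [/\ Eset H \subset Eset G,
      (forall C, C \in vcl H -> union_of (vcl G) C)
    & (forall C, C \in ecl H -> union_of (ecl G) C)].

Definition ssub_model (H G : cgraph) : Prop :=
  sub_model H G /\ ~ sub_model G H.

Definition covered (H G : cgraph) : Prop :=
  ssub_model H G /\
  ~ (exists F, is_pdCG F /\ ssub_model H F /\ ssub_model F G).

(* quadruplet representation (E, LL, EE) (V is implicit) *)
Definition quadruplet := ({set edge} * {set 'I_p} * {set edge})%type.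

Definition quad (q : nat) (G : cgraph) : quadruplet :=
  let E := Eset G in
  let EL := E :&: FL in
  let ER := E :&: FR in
  (E,
   [set i : 'I_p | (i < q)%N && ([set i] \in vcl G)],
   [set e in EL :&: (tauE @: ER) | [set e] \in ecl G]).

(* the quadruplets (i)-(vii) of Proposition 8, built from the
   quadruplet (E, LL, EE) of G *)
Definition neighbour_quad (Q QG : quadruplet) : Prop :=
  let: (E, LL, EE) := QG in
  (exists2 i, i \in LL & Q = (E, LL :\ i, EE)) \/
  (exists2 e, e \in EE & Q = (E, LL, EE :\ e)) \/
  (exists2 e, e \in EE & Q = (E :\ e, LL, EE :\ e)) \/
  (exists2 e, e \in EE & Q = (E :\ tauE e, LL, EE :\ e)) \/
  (exists2 e, (e \in E) && (tauE e \notin E) & Q = (E :\ e, LL, EE)) \/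
  (exists2 i, (i, tau i) \in E & Q = (E :\ (i, tau i), LL, EE)) \/
  (exists2 e, [&& e \in E, tauE e \in E, e != tauE e,
                  e \notin EE & tauE e \notin EE]
            & Q = (E :\: [set e; tauE e], LL, EE)).

End PairedData.

From HB Require Import structures.
From mathcomp Require Import all_boot zify.
Set Implicit Arguments. Unset Strict Implicit. Unset Printing Implicit Defensive.

(* A pdCG is determined by its code: its edge set E, its set A of vertices in
   atomic classes and its set At of edges in atomic classes, all other vertices
   and edges being grouped in twin pairs.  Model inclusion is componentwise
   inclusion of codes, and a pdCG has (p + |E| + |A| + |At|) / 2 colour classes,
   so the rank |E| + |A| + |At| is even and drops by at least 2 along every
   strict inclusion.  Hence H is covered by G exactly when the code of H arises
   from that of G by one of four moves lowering the rank by exactly 2: merging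
   two atomic vertex classes, deleting an atomic edge class, deleting a
   twin-pairing edge class, or merging two atomic edge classes.  The quadruplet
   of a pdCG determines its code, and reading the four moves on quadruplets
   gives the seven families (i)-(vii). *)

Lemma setD1_notin (T : finType) (S : {set T}) a : a \notin S -> S :\ a = S.
Proof. by move=> aS; apply/setDidPl; rewrite disjoint_sym disjoints1. Qed.

Lemma setD2_notin_l (T : finType) (S : {set T}) a b :
  a \notin S -> S :\: [set a; b] = S :\ b.
Proof. by move=> aS; rewrite -setDDl (setD1_notin aS). Qed.

Lemma card_setD2 (T : finType) (S : {set T}) a b :
  a \in S -> b \in S -> a != b -> #|S :\: [set a; b]| + 2 = #|S|.
Proof.
move=> aS bS ab; rewrite -(cardsID [set a; b] S) (setIidPr _) ?cards2 ?ab 1?addnC //.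
by rewrite subUset !sub1set aS bS.
Qed.

Lemma ord_neq_nat n (i j : 'I_n) : i != j -> (i : nat) <> j.
Proof. by move=> /eqP ij /val_inj. Qed.

Lemma mem_involution_pair (T : finType) (f : T -> T) (D : {set T}) x y :
  {in D, involutive f} -> x \in D -> y \in D ->
  (f x \in [set y; f y]) = (x \in [set y; f y]).
Proof.
move=> fK xD yD; rewrite !in_set2 (inj_in_eq (can_in_inj fK)) // orbC.
by congr (_ || _); apply/eqP/eqP => [<-|->]; rewrite fK.
Qed.

Section UnionOf.
Variable T : finType.
Implicit Types (P : {set {set T}}) (C : {set T}).

Lemma union_of_intro P C :
  (forall x, x \in C -> exists2 B, B \in P & x \in B /\ B \subset C) ->
  union_of P C.
Proof.
move=> covC; exists [set B in P | B \subset C].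
  by apply/subsetP => B; rewrite inE => /andP[].
apply/setP => x; apply/idP/bigcupP => [/covC[B BP [xB BC]]|[B]].
  by exists B; rewrite ?inE ?BP.
by rewrite inE => /andP[_ /subsetP]; apply.
Qed.

Lemma union_of_set1 P x : union_of P [set x] -> [set x] \in P.
Proof.
case=> S SP defx; have /bigcupP[B BS xB] : x \in cover S by rewrite -defx set11.
have BP := subsetP SP B BS.
suff -> : [set x] = B by [].
by apply/eqP; rewrite eqEsubset sub1set xB defx (bigcup_sup _ BS).
Qed.

End UnionOf.

Section TwinClasses.
Variables (T : finType) (f : T -> T) (D A : {set T}).
Hypothesis AD : A \subset D.
Hypothesis twinD : forall x, x \in D -> x \notin A ->
  [/\ f x \in D, f x \notin A, f (f x) = x & f x != x].

Definition twin_class x := if x \in A then [set x] else [set x; f x].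

Lemma mem_twin_class x : x \in twin_class x.
Proof. by rewrite /twin_class; case: ifP; rewrite !inE eqxx. Qed.

Lemma twin_class_sub x : x \in D -> twin_class x \subset D.
Proof.
rewrite /twin_class; case: ifP => [_ xD|xA xD]; first by rewrite sub1set.
have [fxD _ _ _] := twinD xD (negbT xA).
by rewrite subUset !sub1set xD fxD.
Qed.

Lemma twin_class_eq x y : x \in D -> y \in twin_class x -> twin_class y = twin_class x.
Proof.
rewrite /twin_class; case: ifP => [xA _|xA xD]; first by rewrite inE => /eqP->; rewrite xA.
have [_ /negbTE fxA fxK _] := twinD xD (negbT xA).
by rewrite !inE => /orP[]/eqP->; rewrite ?xA // fxA fxK setUC.
Qed.

Lemma partition_twin_classes : partition (twin_class @: D) D.
Proof.
apply/and3P; split.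
- apply/eqP/setP => y; apply/bigcupP/idP => [[C /imsetP[x xD ->]]|yD].
    exact: subsetP (twin_class_sub xD) y.
  by exists (twin_class y); [apply: imset_f | apply: mem_twin_class].
- apply/trivIsetP => _ _ /imsetP[x xD ->] /imsetP[y yD ->].
  apply: contraR => /pred0Pn[z /andP[zx zy]] /=.
  by rewrite -(twin_class_eq xD zx) (twin_class_eq yD zy).
- by apply/imsetP => -[x _ /setP/(_ x)]; rewrite mem_twin_class inE.
Qed.

Lemma twin_classes_set1 x : ([set x] \in twin_class @: D) = (x \in A).
Proof.
apply/imsetP/idP => [[y yD]|xA]; last by exists x; rewrite ?(subsetP AD) /twin_class ?xA.
rewrite /twin_class; case: ifP => [yA /set1_inj->//|yA /setP defx].
have [_ _ _ /eqP[]] := twinD yD (negbT yA).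
by move: (defx y) (defx (f y)); rewrite !inE !eqxx orbT => /eqP-> /eqP.
Qed.

End TwinClasses.

Lemma fixfree_involution_card_even (T : finType) (f : T -> T) (D : {set T}) :
  {in D, forall x, [/\ f x \in D, f (f x) = x & f x != x]} -> ~~ odd #|D|.
Proof.
move=> twinD; have twinD0 x : x \in D -> x \notin set0 ->
    [/\ f x \in D, f x \notin set0, f (f x) = x & f x != x].
  by move=> /twinD[? ? ?] _; split; rewrite ?inE.
rewrite (card_partition (partition_twin_classes twinD0)).
rewrite (eq_bigr (fun=> 2)) ?sum_nat_const ?oddM ?andbF //.
move=> _ /imsetP[x xD ->]; rewrite /twin_class inE cards2.
by have [_ _] := twinD x xD; rewrite eq_sym => ->.
Qed.

Definition twin_partition (T : finType) (f : T -> T) (P : {set {set T}}) (D : {set T}) :=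
  partition P D /\
  forall C, C \in P -> (exists x, C = [set x]) \/ (exists x, C = [set x; f x]).

Section TwinPartition.
Variables (T : finType) (f : T -> T) (P : {set {set T}}) (D : {set T}).
Hypotheses (PD : twin_partition f P D) (fK : {in D, involutive f}).

Lemma nonatomic_class C x : C \in P -> x \in C -> [set x] \notin P -> C = [set x; f x].
Proof.
case: PD => /cover_partition coverP shapeP CP xC xPn.
have [[y defC]|[y defC]] := shapeP C CP.
  by move: xC xPn; rewrite defC inE => /eqP->; rewrite -defC CP.
have yD : y \in D by rewrite -coverP; apply/bigcupP; exists C; rewrite // defC !inE eqxx.
by move: xC; rewrite defC !inE => /orP[]/eqP->; rewrite ?fK // setUC.
Qed.

Lemma nonatomic_pair_class x : x \in D -> [set x] \notin P -> [set x; f x] \in P.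
Proof.
case: (PD) => /cover_partition <- _ /bigcupP[C CP xC] xPn.
by rewrite -(nonatomic_class CP xC xPn).
Qed.

Lemma nonatomic_twin x :
  x \in D -> [set x] \notin P -> [/\ f x \in D, [set f x] \notin P & f x != x].
Proof.
move=> xD xPn; have pairP := nonatomic_pair_class xD xPn.
case: PD => Ppart _; have coverP := cover_partition Ppart.
have trivP := partition_trivIset Ppart.
have fx_neq : f x != x by apply: contraNneq xPn => fxx; rewrite fxx setUid in pairP.
split=> //; first by rewrite -coverP; apply/bigcupP; exists [set x; f x]; rewrite // !inE eqxx orbT.
apply/negP => fxP; have fx_pair : f x \in [set x; f x] by rewrite !inE eqxx orbT.
have : x \in [set f x].
  by rewrite -(def_pblock trivP fxP (set11 (f x))) (def_pblock trivP pairP fx_pair) !inE eqxx.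
by rewrite inE eq_sym (negbTE fx_neq).
Qed.

End TwinPartition.

Lemma twin_partition_refine (T : finType) (f : T -> T) PH DH PG DG :
  twin_partition f PH DH -> twin_partition f PG DG -> {in DG, involutive f} ->
  DH \subset DG -> (forall x, [set x] \in PH -> [set x] \in PG) ->
  forall C, C \in PH -> union_of PG C.
Proof.
move=> PHD PGD fK DHG atomsHG C CH; apply: union_of_intro => x xC.
have xDH : x \in DH by case: PHD => /cover_partition <- _; apply/bigcupP; exists C.
have [xG|xGn] := boolP ([set x] \in PG); first by exists [set x]; rewrite ?sub1set ?inE.
have defC := nonatomic_class PHD (sub_in1 (subsetP DHG) fK) CH xC (contra (atomsHG x) xGn).
exists [set x; f x]; first exact: (nonatomic_pair_class PGD fK (subsetP DHG x xDH) xGn).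
by rewrite -defC; split.
Qed.

Section PairedData.
Variables (p q : nat) (tau : 'I_p -> 'I_p).
Hypothesis tauK : involutive tau.
Hypothesis tau_neq : forall i, tau i != i.
Hypothesis tau_LR : tau @: [set i : 'I_p | i < q] = [set i : 'I_p | q <= i].

Local Notation tE := (tauE tau).
Local Notation FV := (FV p).
Local Notation FL := (FL tau).
Local Notation FR := (FR tau).

Lemma tau_ltq i : (tau i < q) = (q <= i).
Proof.
have := mem_imset [set j : 'I_p | j < q] i (can_inj tauK).
by rewrite tau_LR !inE => LRi; rewrite ltnNge LRi -leqNgt.
Qed.

Lemma tau_lt_neq (i j : 'I_p) : i < j -> tau i != tau j.
Proof. by move=> ij; rewrite (inj_eq (can_inj tauK)); apply: contraTneq ij => ->; rewrite ltnn. Qed.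

Lemma tauE_FV e : e \in FV -> tE e \in FV.
Proof.
case: e => i j; rewrite /tauE inE /= => ij; have := ord_neq_nat (tau_lt_neq ij).
by case: (ltnP (tau i) (tau j)); rewrite inE /=; lia.
Qed.

Lemma tauEK : {in FV, involutive tE}.
Proof.
case=> i j; rewrite /tauE inE /= => ij.
by case: (ltnP (tau i) (tau j)) => _ /=; rewrite !tauK ?ij // ltnNge ltnW.
Qed.

Lemma mem_FL_tauE e : e \in FV -> (e \in FL) = (tE e \in FR).
Proof.
case: e => i j; rewrite /tauE inE /= => ij; have := ord_neq_nat (tau_lt_neq ij).
have := tau_ltq i; have := tau_ltq j; have := tau_ltq (tau i); have := tau_ltq (tau j).
rewrite !tauK; by case: (ltnP (tau i) (tau j)); rewrite !inE /= ?tauK ij => *; apply/idP/idP; lia.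
Qed.

Lemma FL_FV e : e \in FL -> e \in FV.
Proof. by rewrite inE => /andP[]. Qed.

Lemma tauE_FL e : e \in FL -> tE e \notin FL.
Proof.
move=> eL; move: (eL); rewrite mem_FL_tauE ?FL_FV // !inE => /andP[_ tEe_lt].
by apply/negP => /andP[_]; rewrite ltnNge ltnW.
Qed.

Lemma FL_tauE e : e \in FV -> tE e != e -> (e \in FL) || (tE e \in FL).
Proof.
case: e => i j eV; apply: contraNT; rewrite negb_or => /andP[eLn].
rewrite mem_FL_tauE ?tauE_FV // tauEK // => eRn.
move: eV eLn eRn; rewrite !inE /= => ij; rewrite ij /= -!leqNgt => ij_le ij_ge.
have /val_inj ji : tau j = i :> nat by apply/eqP; rewrite eqn_leq ij_ge ij_le.
have ij' : tau i = j by rewrite -ji tauK.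
by rewrite /tauE /= ij' ji ltnNge (ltnW ij).
Qed.

Lemma tauE_fixed e : tE e = e -> e = (e.1, tau e.1).
Proof.
case: e => i j; rewrite /tauE /=; case: ltnP => _ [ti tj]; last by rewrite tj.
by move: (tau_neq i); rewrite ti eqxx.
Qed.

Lemma tauE_twin i : (i, tau i) \in FV -> tE (i, tau i) = (i, tau i).
Proof. by rewrite inE /= => lt_i; rewrite /tauE /= tauK ltnNge ltnW. Qed.

Record pdcode := PDCode {
  edges : {set edge p};
  vatoms : {set 'I_p};
  eatoms : {set edge p} }.

Definition code_valid (c : pdcode) :=
  [/\ edges c \subset FV, eatoms c \subset edges c,
      {in vatoms c, forall i, tau i \in vatoms c} &
      forall e, e \in edges c -> e \notin eatoms c ->
        [/\ tE e \in edges c, tE e \notin eatoms c & tE e != e]].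

Definition code_of (G : cgraph p) :=
  PDCode (Eset G) [set i | [set i] \in vcl G] [set e | [set e] \in ecl G].

Definition code_le (c d : pdcode) :=
  [&& edges c \subset edges d, vatoms c \subset vatoms d & eatoms c \subset eatoms d].

Lemma pdCG_vertex_partition G : is_pdCG tau G -> twin_partition tau (vcl G) [set: 'I_p].
Proof. by case. Qed.

Lemma pdCG_edge_partition G : is_pdCG tau G -> twin_partition tE (ecl G) (Eset G).
Proof.
case=> _ EP _ _ shapeE; split=> // C /shapeE[|[e [_ ->]]]; first by left.
by right; exists e.
Qed.

Lemma pdCG_tauEK G : is_pdCG tau G -> {in Eset G, involutive tE}.
Proof. by case=> _ _ /subsetP EV _ _; apply: sub_in1 tauEK. Qed.

Lemma code_of_valid G : is_pdCG tau G -> code_valid (code_of G).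
Proof.
move=> GP; have [_ _ EV _ _] := GP.
have VP := pdCG_vertex_partition GP; have EP := pdCG_edge_partition GP.
split=> //=.
- by apply/subsetP => e; rewrite inE => /bigcup_sup/subsetP; apply; rewrite inE.
- move=> i; rewrite !inE; apply: contraLR => tiA.
  by have [_] := nonatomic_twin VP (in1W tauK) (in_setT (tau i)) tiA; rewrite tauK.
- by move=> e eE; rewrite !inE => /(nonatomic_twin EP (pdCG_tauEK GP) eE).
Qed.

Lemma sub_model_code H G : is_pdCG tau H -> is_pdCG tau G ->
  sub_model H G <-> code_le (code_of H) (code_of G).
Proof.
move=> HP GP; split=> [[EHG vHG eHG]|/and3P[EHG AHG AtHG]].
  apply/and3P; split=> //; apply/subsetP => x; rewrite !inE.
    by move/vHG/union_of_set1.
  by move/eHG/union_of_set1.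
split=> //.
  apply: twin_partition_refine (pdCG_vertex_partition HP) (pdCG_vertex_partition GP)
    (in1W tauK) (subxx _) _ => i; have := subsetP AHG i; rewrite !inE; exact.
apply: twin_partition_refine (pdCG_edge_partition HP) (pdCG_edge_partition GP)
  (pdCG_tauEK GP) EHG _ => e; have := subsetP AtHG e; rewrite !inE; exact.
Qed.

Lemma code_valid_realized c : code_valid c -> exists2 G, is_pdCG tau G & code_of G = c.
Proof.
case: c => E A At [/= EV AtE Acl Etw].
have twinV i : i \in [set: 'I_p] -> i \notin A ->
    [/\ tau i \in [set: 'I_p], tau i \notin A, tau (tau i) = i & tau i != i].
  by move=> _ iA; split; rewrite ?inE ?tauK //; apply: contra iA => /Acl; rewrite tauK.
have twinE e : e \in E -> e \notin At -> [/\ tE e \in E, tE e \notin At, tE (tE e) = e & tE e != e].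
  by move=> eE eAt; have [] := Etw e eE eAt; split; rewrite ?tauEK ?(subsetP EV).
pose G := CGraph (twin_class tau A @: [set: 'I_p]) (twin_class tE At @: E).
have EG : Eset G = E := cover_partition (partition_twin_classes twinE).
exists G.
  split; rewrite ?EG ?partition_twin_classes //=.
    by move=> _ /imsetP[i _ ->]; rewrite /twin_class; case: ifP => _; [left|right]; exists i.
  move=> _ /imsetP[e eE ->]; rewrite /twin_class; case: ifP => eAt; first by left; exists e.
  by right; exists e; have [_ _ _] := twinE e eE (negbT eAt); rewrite eq_sym.
by rewrite /code_of EG; congr PDCode; apply/setP => x; rewrite inE twin_classes_set1.
Qed.

Definition code_rank (c : pdcode) := #|edges c| + #|vatoms c| + #|eatoms c|.

Lemma code_rank_leif c d : code_le c d ->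
  code_rank c <= code_rank d
    ?= iff [&& edges c == edges d, vatoms c == vatoms d & eatoms c == eatoms d].
Proof.
case/and3P => EE AA AtAt; rewrite /code_rank andbA.
by do 2?apply: leqif_add; apply: subset_leqif_cards.
Qed.

Lemma code_le_rank c d : code_le c d -> code_rank c <= code_rank d.
Proof. by move/code_rank_leif=> []. Qed.

Lemma code_le_rank_eq c d : code_le c d -> code_rank c = code_rank d -> c = d.
Proof.
move=> /code_rank_leif[_ eq_rank] /eqP; rewrite eq_rank {eq_rank}.
by case: c d => [E A At] [E' A' At'] /and3P[/= /eqP-> /eqP-> /eqP->].
Qed.

Lemma code_rank_even c : code_valid c -> ~~ odd (code_rank c).
Proof.
case=> EV AtE Acl Etw.
have A_even : ~~ odd #|vatoms c|.
  by apply: (fixfree_involution_card_even (f := tau)) => i iA; split; rewrite ?Acl.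
have EAt_even : ~~ odd #|edges c :\: eatoms c|.
  apply: (fixfree_involution_card_even (f := tE)) => e /setDP[eE eAt].
  by have [tE_E tE_At tE_neq] := Etw e eE eAt; rewrite inE tE_E tE_At tauEK ?(subsetP EV).
move: A_even EAt_even; rewrite /code_rank -(cardsID (eatoms c) (edges c)) (setIidPr AtE).
lia.
Qed.

Definition merge_vertices (c : pdcode) i :=
  PDCode (edges c) (vatoms c :\: [set i; tau i]) (eatoms c).
Definition remove_edge (c : pdcode) (e : edge p) :=
  PDCode (edges c :\ e) (vatoms c) (eatoms c :\ e).
Definition remove_twin_edges (c : pdcode) e :=
  PDCode (edges c :\: [set e; tE e]) (vatoms c) (eatoms c).
Definition merge_edges (c : pdcode) e :=
  PDCode (edges c) (vatoms c) (eatoms c :\: [set e; tE e]).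

Inductive code_step (c : pdcode) : pdcode -> Prop :=
| StepMergeVertices i of i \in vatoms c : code_step c (merge_vertices c i)
| StepRemoveEdge e of e \in eatoms c : code_step c (remove_edge c e)
| StepRemoveTwinEdges e of e \in edges c & e \notin eatoms c :
    code_step c (remove_twin_edges c e)
| StepMergeEdges e of e \in eatoms c & tE e \in eatoms c & tE e != e :
    code_step c (merge_edges c e).

Section ValidCode.
Variable c : pdcode.
Hypothesis cV : code_valid c.

Lemma merge_vertices_valid i : code_valid (merge_vertices c i).
Proof.
case: cV => EV AtE Acl Etw; split=> //= j; rewrite !inE => /andP[jn jA].
by rewrite Acl // andbT -in_set2 (mem_involution_pair (D := setT)) ?inE ?(in1W tauK).
Qed.

Lemma remove_edge_valid e : e \in eatoms c -> code_valid (remove_edge c e).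
Proof.
case: cV => EV AtE Acl Etw eAt; split=> /=.
- exact: subset_trans (subsetDl _ _) EV.
- exact: setSD.
- exact: Acl.
move=> x; rewrite !inE negb_and negbK => /andP[xe xE] /orP[/eqP xe'|xAt].
  by rewrite xe' eqxx in xe.
have [tE_E tE_At tE_neq] := Etw x xE xAt.
by rewrite tE_E (negbTE tE_At) andbF andbT; split=> //; apply: contraNneq tE_At => ->.
Qed.

Lemma remove_twin_edges_valid e :
  e \in edges c -> e \notin eatoms c -> code_valid (remove_twin_edges c e).
Proof.
case: cV => EV AtE Acl Etw eE eAt; have [tE_E tE_At _] := Etw e eE eAt.
have fK : {in edges c, involutive tE} := sub_in1 (subsetP EV) tauEK.
split=> //=.
- exact: subset_trans (subsetDl _ _) EV.
- apply/subsetP => x xAt; rewrite !inE (subsetP AtE x xAt) andbT.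
  by apply/negP => /orP[]/eqP xe; move: xAt; rewrite xe ?(negbTE eAt) ?(negbTE tE_At).
move=> x /setDP[xE xn] xAt; have [tx_E tx_At tx_neq] := Etw x xE xAt.
by rewrite inE (mem_involution_pair fK) ?xn.
Qed.

Lemma merge_edges_valid e : e \in eatoms c -> tE e \in eatoms c -> tE e != e ->
  code_valid (merge_edges c e).
Proof.
case: cV => EV AtE Acl Etw eAt tE_At tE_neq.
have fK : {in edges c, involutive tE} := sub_in1 (subsetP EV) tauEK.
have [eE tE_E] := (subsetP AtE e eAt, subsetP AtE _ tE_At).
split=> //=; first exact: subset_trans (subsetDl _ _) AtE.
move=> x xE; rewrite inE negb_and negbK => /orP[xn|xAt]; last first.
  by have [tx_E tx_At tx_neq] := Etw x xE xAt; rewrite inE (negbTE tx_At) andbF.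
rewrite inE (mem_involution_pair fK) // xn /=.
move: xn; rewrite in_set2 => /orP[]/eqP->; first by split.
by rewrite fK //; split=> //; rewrite eq_sym.
Qed.

Lemma code_step_valid d : code_step c d -> code_valid d.
Proof.
case=> [i _|e|e|e]; [exact: merge_vertices_valid | exact: remove_edge_valid |
  exact: remove_twin_edges_valid | exact: merge_edges_valid].
Qed.

Lemma code_step_rank d : code_step c d -> code_rank d + 2 = code_rank c.
Proof.
case: cV => EV AtE Acl Etw.
have AtE' := subsetP AtE; rewrite /code_rank.
case=> [i iA|e eAt|e eE eAt|e eAt tE_At tE_neq] /=.
- rewrite -(card_setD2 iA (Acl i iA)) 1?eq_sym ?tau_neq //.
  by set x := #|_ :\: _|; lia.
- rewrite (cardsD1 e (edges c)) (cardsD1 e (eatoms c)) eAt AtE' //=.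
  by set x := #|edges c :\ e|; set y := #|eatoms c :\ e|; lia.
- have [tE_E _ tE_neq] := Etw e eE eAt.
  by rewrite -(card_setD2 eE tE_E) 1?eq_sym //; set x := #|_ :\: _|; lia.
- by rewrite -(card_setD2 eAt tE_At) 1?eq_sym //; set x := #|_ :\: _|; lia.
Qed.

End ValidCode.

Lemma code_step_le c d : code_step c d -> code_le d c.
Proof. by case=> *; rewrite /code_le /= ?subsetDl ?subxx. Qed.

Lemma eatoms_tauE c e : code_valid c -> e \in eatoms c -> tE e \in edges c -> tE e \in eatoms c.
Proof.
case=> EV AtE _ Etw eAt tE_E; apply: contraT => tE_At.
by have [_] := Etw _ tE_E tE_At; rewrite tauEK ?eAt // (subsetP EV) ?(subsetP AtE).
Qed.

Section CodeBelow.
Variables (c h : pdcode).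
Hypotheses (hV : code_valid h) (hc : code_le h c).

Lemma le_merge_vertices i : i \notin vatoms h -> code_le h (merge_vertices c i).
Proof.
case: hV => _ _ Acl _; case/and3P: hc => EE AA AtAt iA.
apply/and3P; split=> //=; apply/subsetP => j jA.
rewrite inE (subsetP AA j jA) andbT in_set2; apply/negP => /orP[]/eqP ji.
  by rewrite -ji jA in iA.
by move/Acl: jA; rewrite ji tauK (negbTE iA).
Qed.

Lemma le_remove_edge e : e \notin edges h -> code_le h (remove_edge c e).
Proof.
case: hV => _ AtE _ _; case/and3P: hc => EE AA AtAt eE.
apply/and3P; split=> //=; apply/subsetP => x xh; rewrite !inE.
  by rewrite (subsetP EE x xh) andbT; apply: contraNneq eE => <-.
by rewrite (subsetP AtAt x xh) andbT; apply: contraNneq eE => <-; apply: (subsetP AtE).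
Qed.

Lemma le_remove_twin_edges e : e \in FV -> e \notin edges h ->
  tE e \notin eatoms c -> code_le h (remove_twin_edges c e).
Proof.
case: hV => _ _ _ Etw; case/and3P: hc => EE AA AtAt eV eE tE_At.
apply/and3P; split=> //=; apply/subsetP => x xh.
rewrite inE (subsetP EE x xh) andbT in_set2; apply/negP => /orP[]/eqP xe.
  by rewrite -xe xh in eE.
have xAt : x \notin eatoms h by apply: contra tE_At; rewrite -xe; apply: (subsetP AtAt).
have [] := Etw x xh xAt; by rewrite xe tauEK // (negbTE eE).
Qed.

Lemma le_merge_edges e : e \notin eatoms h -> tE e \notin eatoms h ->
  code_le h (merge_edges c e).
Proof.
case/and3P: hc => EE AA AtAt eAt tE_At.
apply/and3P; split=> //=; apply/subsetP => x xh.
rewrite inE (subsetP AtAt x xh) andbT in_set2.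
by apply/negP => /orP[]/eqP xe; rewrite -xe xh in eAt tE_At.
Qed.

End CodeBelow.

Lemma code_step_exists c h : code_valid c -> code_valid h ->
  code_le h c -> ~~ code_le c h -> exists2 d, code_step c d & code_le h d.
Proof.
move=> cV hV hc ch; have [EV AtE _ Etw] := cV; have [_ _ _ hEtw] := hV.
have [AA|/subsetPn[i iA iAh]] := boolP (vatoms c \subset vatoms h); last first.
  by exists (merge_vertices c i); [constructor | apply: le_merge_vertices].
have [EE|/subsetPn[e eE eEh]] := boolP (edges c \subset edges h); last first.
  have [eAt|eAt] := boolP (e \in eatoms c).
    by exists (remove_edge c e); [constructor | apply: le_remove_edge].
  have [_ tE_At _] := Etw e eE eAt.
  exists (remove_twin_edges c e); first by constructor.
  by apply: le_remove_twin_edges; rewrite ?(subsetP EV).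
have [AtAt|/subsetPn[e eAt eAth]] := boolP (eatoms c \subset eatoms h).
  by rewrite /code_le EE AA AtAt in ch.
have [tE_Eh tE_Ath tE_neq] := hEtw e (subsetP EE e (subsetP AtE e eAt)) eAth.
have tE_At : tE e \in eatoms c.
  by apply: eatoms_tauE => //; case/and3P: hc => /subsetP hEc _ _; apply: hEc.
by exists (merge_edges c e); [constructor | apply: le_merge_edges].
Qed.

Lemma code_le_refl (c : pdcode) : code_le c c.
Proof. by rewrite /code_le !subxx. Qed.

Lemma code_step_nge c d : code_valid c -> code_step c d -> ~~ code_le c d.
Proof.
move=> cV cd; apply/negP => /code_le_rank.
by rewrite -(code_step_rank cV cd); lia.
Qed.

Lemma code_step_between c d k : code_valid c -> code_step c d -> code_valid k ->
  code_le d k -> code_le k c -> k = d \/ k = c.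
Proof.
move=> cV cd kV dk kc.
have [eq_dk|neq_dk] := eqVneq (code_rank d) (code_rank k).
  by left; apply/esym/(code_le_rank_eq dk).
right; apply: (code_le_rank_eq kc).
move: (code_rank_even kV) (code_rank_even (code_step_valid cV cd)) (code_step_rank cV cd).
by move: (code_le_rank dk) (code_le_rank kc) neq_dk; lia.
Qed.

Lemma covered_code_step H G : is_pdCG tau H -> is_pdCG tau G ->
  covered tau H G -> code_step (code_of G) (code_of H).
Proof.
move=> HP GP [[HG GHn] no_mid]; have [HV GV] := (code_of_valid HP, code_of_valid GP).
have le_HG := (sub_model_code HP GP).1 HG.
have nle_GH : ~~ code_le (code_of G) (code_of H) by apply/negP => /(sub_model_code GP HP).
have [d Gd Hd] := code_step_exists GV HV le_HG nle_GH.
have [dH|ndH] := boolP (code_le d (code_of H)).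
  suff -> : code_of H = d by [].
  by apply: (code_le_rank_eq Hd); apply/eqP; rewrite eqn_leq !code_le_rank.
case: no_mid; have [F FP dF] := code_valid_realized (code_step_valid GV Gd).
exists F; rewrite -dF in Gd Hd ndH; split=> //; split; split.
- exact/(sub_model_code HP FP).
- by move/(sub_model_code FP HP); apply/negP.
- exact/(sub_model_code FP GP)/code_step_le.
- by move/(sub_model_code GP FP); apply/negP/code_step_nge.
Qed.

Lemma code_step_covered H G : is_pdCG tau H -> is_pdCG tau G ->
  code_step (code_of G) (code_of H) -> covered tau H G.
Proof.
move=> HP GP GH; have GV := code_of_valid GP.
split; first split.
- exact/(sub_model_code HP GP)/code_step_le.
- by move/(sub_model_code GP HP); apply/negP/code_step_nge.
case=> K [KP [[/(sub_model_code HP KP) HK nKH] [/(sub_model_code KP GP) KG nGK]]].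
have [KH|KG'] := code_step_between GV GH (code_of_valid KP) HK KG.
  by apply: nKH; apply/(sub_model_code KP HP); rewrite KH code_le_refl.
by apply: nGK; apply/(sub_model_code GP KP); rewrite KG' code_le_refl.
Qed.

Definition code_LL (c : pdcode) := [set i : 'I_p | (i < q) && (i \in vatoms c)].
Definition code_EE (c : pdcode) :=
  [set e in (edges c :&: FL) :&: (tE @: (edges c :&: FR)) | e \in eatoms c].
Definition code_quad (c : pdcode) : quadruplet p := (edges c, code_LL c, code_EE c).

Lemma quad_code_of G : quad tau q G = code_quad (code_of G).
Proof. by congr (_, _, _); apply/setP => x; rewrite !inE. Qed.

Lemma code_EE_FL c e : e \in code_EE c -> e \in FL.
Proof. by rewrite !inE => /andP[/andP[/andP[_ ->]]]. Qed.

Lemma code_EE_tauE c e : e \in code_EE c -> tE e \notin code_EE c.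
Proof. by move/code_EE_FL/tauE_FL; apply: contra => /code_EE_FL. Qed.

Lemma code_EE_setD_twins c e :
  e \in code_EE c -> code_EE c :\: [set e; tE e] = code_EE c :\ e.
Proof. by move/code_EE_tauE => tE_EE; rewrite setUC setD2_notin_l. Qed.

Lemma quad_merge_vertices c (i : 'I_p) :
  i < q -> code_quad (merge_vertices c i) = (edges c, code_LL c :\ i, code_EE c).
Proof.
move=> iq; congr (_, _, _); apply/setP => k; rewrite !inE.
have [->|_] := eqVneq k (tau i); last by rewrite orbF andbCA.
by rewrite tau_ltq leqNgt iq /= andbF.
Qed.

Lemma mem_code_EE c e : code_valid c ->
  (e \in code_EE c) = [&& e \in FL, e \in eatoms c & tE e \in eatoms c].
Proof.
move=> cV; have [EV AtE _ _] := cV; rewrite inE !in_setI -!andbA.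
have [eL|] := boolP (e \in FL); last by rewrite !andbF.
have [eAt|] := boolP (e \in eatoms c); last by rewrite !andbF.
have eV := FL_FV eL.
rewrite (subsetP AtE e eAt) andbT; apply/imsetP/idP => [[x /setIP[xE _] ex]|tE_At].
  by apply: eatoms_tauE; rewrite // ex tauEK ?(subsetP EV).
by exists (tE e); rewrite ?tauEK // inE (subsetP AtE _ tE_At) -mem_FL_tauE.
Qed.

Section ValidQuad.
Variable c : pdcode.
Hypothesis cV : code_valid c.

Lemma code_EE_twins e : e \in FV ->
  (e \in code_EE c) || (tE e \in code_EE c) = [&& e \in eatoms c, tE e \in eatoms c & tE e != e].
Proof.
move=> eV; rewrite !(mem_code_EE _ cV) tauEK //.
have [tEe|neq] := eqVneq (tE e) e.
  have eLn : e \notin FL by apply/negP => eL; have := tauE_FL eL; rewrite tEe eL.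
  by rewrite tEe (negbTE eLn) /= !andbF.
have [eL|eLn] := boolP (e \in FL); first by rewrite (negbTE (tauE_FL eL)) /= orbF andbT.
have tEL : tE e \in FL by move: (FL_tauE eV neq); rewrite (negbTE eLn).
by rewrite tEL /= andbT andbC.
Qed.

Lemma code_EE_setD_nontwins e : e \in FV ->
  ~~ [&& e \in eatoms c, tE e \in eatoms c & tE e != e] ->
  code_EE c :\: [set e; tE e] = code_EE c.
Proof.
move=> eV; rewrite -code_EE_twins // negb_or => /andP[eEE tE_EE].
by rewrite setD2_notin_l // setD1_notin.
Qed.

Lemma quad_remove_edge e : e \in eatoms c ->
  code_quad (remove_edge c e) = (edges c :\ e, code_LL c, code_EE c :\: [set e; tE e]).
Proof.
move=> eAt; have [EV AtE _ _] := cV; have eV := subsetP EV e (subsetP AtE e eAt).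
congr (_, _, _); apply/setP => x.
rewrite in_setD (mem_code_EE _ (remove_edge_valid cV eAt)) (mem_code_EE _ cV) /= !in_setD1 in_set2.
have [xL|] := boolP (x \in FL); rewrite ?andbF //=.
have xV := FL_FV xL.
have -> : (tE x == e) = (x == tE e) by apply/eqP/eqP => [<-|->]; rewrite tauEK.
by case: (x == e); case: (x == tE e); rewrite /= ?andbF.
Qed.

Lemma quad_remove_twin_edges e : e \in edges c -> e \notin eatoms c ->
  code_quad (remove_twin_edges c e) = (edges c :\: [set e; tE e], code_LL c, code_EE c).
Proof.
move=> eE eAt; congr (_, _, _); apply/setP => x.
by rewrite (mem_code_EE _ (remove_twin_edges_valid cV eE eAt)) (mem_code_EE _ cV).
Qed.

Lemma quad_merge_edges e : e \in eatoms c -> tE e \in eatoms c -> tE e != e ->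
  code_quad (merge_edges c e) = (edges c, code_LL c, code_EE c :\: [set e; tE e]).
Proof.
move=> eAt tE_At neq; have [EV AtE _ _] := cV; have eV := subsetP EV e (subsetP AtE e eAt).
congr (_, _, _); apply/setP => x.
rewrite in_setD (mem_code_EE _ (merge_edges_valid cV eAt tE_At neq)) (mem_code_EE _ cV) /= !in_setD.
have [xL|] := boolP (x \in FL); rewrite ?andbF //=.
rewrite (mem_involution_pair tauEK (FL_FV xL) eV).
by case: (x \in [set e; tE e]).
Qed.

Lemma code_EE_setD_twinsC e : e \in FV -> tE e \in code_EE c ->
  code_EE c :\: [set e; tE e] = code_EE c :\ tE e.
Proof. by move=> eV /code_EE_setD_twins; rewrite tauEK // setUC. Qed.

(* Deleting an atomic edge gives family (iii) or (iv) when its twin is atomic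
   too, (vi) when it is its own twin, and (v) when its twin is absent. *)
Lemma neighbour_remove_edge e : e \in eatoms c ->
  neighbour_quad tau (code_quad (remove_edge c e)) (code_quad c).
Proof.
move=> eAt; have [EV AtE _ _] := cV; have eE := subsetP AtE e eAt.
have eV := subsetP EV e eE; rewrite quad_remove_edge //=.
have [twins|nontwins] := boolP [&& e \in eatoms c, tE e \in eatoms c & tE e != e].
  rewrite -code_EE_twins // in twins; case/orP: twins => [eEE|tE_EE].
    by do 2 right; left; exists e; rewrite ?code_EE_setD_twins.
  by do 3 right; left; exists (tE e); rewrite ?tauEK ?code_EE_setD_twinsC.
rewrite code_EE_setD_nontwins //.
have [tEe|neq] := eqVneq (tE e) e.
  by do 5 right; left; exists e.1; rewrite -(tauE_fixed tEe).
have tE_E : tE e \notin edges c.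
  by apply: contra nontwins => /(eatoms_tauE cV eAt) ->; rewrite eAt neq.
by do 4 right; left; exists e; rewrite ?eE.
Qed.

Lemma code_step_neighbour d : code_step c d -> neighbour_quad tau (code_quad d) (code_quad c).
Proof.
have [EV AtE Acl Etw] := cV.
case=> [i iA|e eAt|e eE eAt|e eAt tE_At neq]; rewrite /=.
- left; have [iq|qi] := ltnP i q; first by exists i; rewrite ?inE ?iq ?quad_merge_vertices.
  exists (tau i); first by rewrite inE tau_ltq qi Acl.
  by rewrite -quad_merge_vertices ?tau_ltq // /merge_vertices tauK setUC.
- exact: neighbour_remove_edge.
- have [tE_E tE_At neq] := Etw e eE eAt; have eV := subsetP EV e eE.
  move: (code_EE_twins eV); rewrite (negbTE eAt) => /negbT; rewrite negb_or.
  case/andP=> eEE tE_EE.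
  by do 6 right; exists e; rewrite ?quad_remove_twin_edges // eE tE_E eq_sym neq eEE.
- have eV := subsetP EV e (subsetP AtE e eAt).
  have := code_EE_twins eV; rewrite eAt tE_At neq => /orP[eEE|tE_EE]; right; left.
    by exists e; rewrite ?quad_merge_edges ?code_EE_setD_twins.
  by exists (tE e); rewrite ?quad_merge_edges ?code_EE_setD_twinsC ?tauEK.
Qed.

Lemma neighbour_code_step Q : neighbour_quad tau Q (code_quad c) ->
  exists2 d, code_step c d & code_quad d = Q.
Proof.
have [EV AtE Acl Etw] := cV.
rewrite /neighbour_quad /= => -[[i iLL ->]|[[e eEE ->]|[[e eEE ->]|[[e eEE ->]|
  [[e /andP[eE tE_E] ->]|[[i iE ->]|[e /and5P[eE tE_E neq eEE tE_EE] ->]]]]]]].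
- move: iLL; rewrite inE => /andP[iq iA].
  by exists (merge_vertices c i); [constructor | apply: quad_merge_vertices].
- have eV := FL_FV (code_EE_FL eEE).
  have /and3P[eAt tE_At neq] : [&& e \in eatoms c, tE e \in eatoms c & tE e != e].
    by rewrite -code_EE_twins // eEE.
  by exists (merge_edges c e); [constructor | rewrite quad_merge_edges ?code_EE_setD_twins].
- move: (eEE); rewrite (mem_code_EE _ cV) => /and3P[_ eAt _].
  by exists (remove_edge c e); [constructor | rewrite quad_remove_edge ?code_EE_setD_twins].
- have eV := FL_FV (code_EE_FL eEE).
  move: (eEE); rewrite (mem_code_EE _ cV) => /and3P[_ _ tE_At].
  exists (remove_edge c (tE e)); first by constructor.
  by rewrite quad_remove_edge // tauEK // setUC code_EE_setD_twins.
- have eAt : e \in eatoms c by apply: contraT => /(Etw e eE)[]; rewrite (negbTE tE_E).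
  exists (remove_edge c e); first by constructor.
  rewrite quad_remove_edge // code_EE_setD_nontwins ?(subsetP EV) //.
  by apply: contra tE_E => /and3P[_ /(subsetP AtE)].
- have tEe := tauE_twin (subsetP EV _ iE).
  have iAt : (i, tau i) \in eatoms c.
    by apply: contraT => /(Etw _ iE)[_ _]; rewrite tEe eqxx.
  exists (remove_edge c (i, tau i)); first by constructor.
  by rewrite quad_remove_edge // code_EE_setD_nontwins ?(subsetP EV) // tEe eqxx !andbF.
- have eV := subsetP EV e eE.
  have eAt : e \notin eatoms c.
    apply: contra eEE => eAt; have := code_EE_twins eV.
    by rewrite eAt (eatoms_tauE cV eAt tE_E) eq_sym neq (negbTE tE_EE) orbF.
  exists (remove_twin_edges c e); first by constructor.
  exact: quad_remove_twin_edges.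
Qed.

End ValidQuad.

Lemma mem_vatoms_LL c i : code_valid c ->
  (i \in vatoms c) = (i \in code_LL c) || (tau i \in code_LL c).
Proof.
case=> _ _ Acl _; rewrite !inE tau_ltq; case: ltnP => [|_] /=; first by rewrite orbF.
by apply/idP/idP => /Acl; rewrite ?tauK.
Qed.

Lemma mem_eatoms_EE c e : code_valid c -> (e \in eatoms c) =
  (e \in edges c) && [|| tE e == e, tE e \notin edges c, e \in code_EE c | tE e \in code_EE c].
Proof.
move=> cV; have [EV AtE _ Etw] := cV.
have [eAt|eAt] := boolP (e \in eatoms c).
  have eE := subsetP AtE e eAt; rewrite eE /=; have [//|neq] := eqVneq (tE e) e.
  have [tE_E|//] := boolP (tE e \in edges c).
  by rewrite code_EE_twins ?(subsetP EV) // eAt (eatoms_tauE cV eAt tE_E) neq.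
have [eE|//] := boolP (e \in edges c); have [tE_E _ neq] := Etw e eE eAt.
by rewrite code_EE_twins ?(subsetP EV) // (negbTE eAt) tE_E (negbTE neq).
Qed.

Lemma code_quad_inj c d : code_valid c -> code_valid d -> code_quad c = code_quad d -> c = d.
Proof.
case: c d => [E A At] [E' A' At'] cV dV [EE LL EEE]; congr PDCode => //; apply/setP => x.
  by rewrite (mem_vatoms_LL _ cV) (mem_vatoms_LL _ dV) LL.
by rewrite (mem_eatoms_EE _ cV) (mem_eatoms_EE _ dV) EEE /= EE.
Qed.

Lemma covered_neighbour H G : is_pdCG tau H -> is_pdCG tau G ->
  covered tau H G <-> neighbour_quad tau (quad tau q H) (quad tau q G).
Proof.
move=> HP GP; have [HV GV] := (code_of_valid HP, code_of_valid GP).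
rewrite !quad_code_of; split=> [/(covered_code_step HP GP)|]; first exact: code_step_neighbour.
case/(neighbour_code_step GV)=> d Gd dH; apply: code_step_covered => //.
by rewrite -(code_quad_inj (code_step_valid GV Gd) HV dH).
Qed.

Lemma neighbour_realized G Q : is_pdCG tau G ->
  neighbour_quad tau Q (quad tau q G) -> exists H, is_pdCG tau H /\ quad tau q H = Q.
Proof.
move=> GP; have GV := code_of_valid GP.
rewrite quad_code_of => /(neighbour_code_step GV)[d Gd <-].
have [H HP Hd] := code_valid_realized (code_step_valid GV Gd).
by exists H; rewrite quad_code_of Hd.
Qed.

End PairedData.

Theorem proposition8 (p q : nat) (tau : 'I_p -> 'I_p)
  (tau_inv : forall i, tau (tau i) = i)
  (tau_nofix : forall i, tau i != i)
  (tau_LR : tau @: [set i : 'I_p | (i < q)%N] = [set i : 'I_p | (q <= i)%N])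
  (G : cgraph p) (HG : is_pdCG tau G) :
  (forall H : cgraph p, is_pdCG tau H ->
     (covered tau H G <-> neighbour_quad tau (quad tau q H) (quad tau q G)))
  /\
  (forall Q : quadruplet p, neighbour_quad tau Q (quad tau q G) ->
     exists H : cgraph p, is_pdCG tau H /\ quad tau q H = Q).
Proof.
split=> [H HH|Q]; first exact: covered_neighbour.
exact: neighbour_realized.
Qed.
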